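(* Let $\mathbf{P}=(p_{i,j})_{i,j=0}^{d}$ be the transition matrix of an ergodic discrete-time Markov chain on $\{0,\dots,d\}$ with stationary distribution $\boldsymbol{\pi}$, let $Y_1,\dots,Y_{W+1}$ be the chain started with $Y_1\sim\boldsymbol{\pi}$, and let $N_{i,j}=\sum_{t=1}^{W}\mathbf{1}_{\{Y_t=i,Y_{t+1}=j\}}$. For $n\ge 0$ let $\epsilon_{j,i}^{(n)}=[\mathbf{P}^{n}]_{j,i}-\pi_i$. Then for every state $i$ and states $j\neq j'$, $$\mathrm{Cov}[N_{i,j},N_{i,j'}]=\pi_i p_{i,j}p_{i,j'}\left(-W\pi_i+\sum_{t'=1}^{W-1}(W-t')\left(\epsilon_{j,i}^{(t'-1)}+\epsilon_{j',i}^{(t'-1)}\right)\right).$$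
   Context: $\mathbf{P}^{0}$ is the identity matrix; $\mathbf{1}_{\{\cdot\}}$ is the indicator function. *)

From HB Require Import structures.
From mathcomp Require Import all_boot all_order all_algebra.
Set Implicit Arguments. Unset Strict Implicit. Unset Printing Implicit Defensive.
Import Order.TTheory GRing.Theory Num.Theory.
Local Open Scope ring_scope.

Section MC.
Variable (R : realFieldType) (d : nat).
Notation S := 'I_d.+1.

Definition stochastic (P : 'M[R]_d.+1) : Prop :=
  (forall i j : S, 0 <= P i j) /\ (forall i : S, \sum_(j < d.+1) P i j = 1).

Definition irreducible (P : 'M[R]_d.+1) : Prop :=
  forall i j : S, exists n : nat, 0 < (P ^+ n) i j.

(* aperiodic: for every state i, gcd{ n >= 1 : P^n_{ii} > 0 } = 1, i.e.
   no k >= 2 divides every such n *)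
Definition aperiodic (P : 'M[R]_d.+1) : Prop :=
  forall i : S, forall k : nat, (1 < k)%N ->
    exists n : nat, (0 < n)%N /\ 0 < (P ^+ n) i i /\ ~~ (k %| n)%N.

Definition ergodic (P : 'M[R]_d.+1) : Prop :=
  stochastic P /\ irreducible P /\ aperiodic P.

Definition stationary (P : 'M[R]_d.+1) (pi : 'rV[R]_d.+1) : Prop :=
  (forall i : S, 0 <= pi 0 i) /\ \sum_(i < d.+1) pi 0 i = 1 /\ pi *m P = pi.

Variable W : nat.
(* a trajectory (Y_1, ..., Y_{W+1}); y t stands for Y_{t+1} *)
Definition path := {ffun 'I_W.+1 -> S}.

Definition path_prob (P : 'M[R]_d.+1) (pi : 'rV[R]_d.+1) (y : path) : R :=
  pi 0 (y ord0) * \prod_(t < W) P (y (inord t)) (y (inord t.+1)).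

Definition expect (P : 'M[R]_d.+1) (pi : 'rV[R]_d.+1) (X : path -> R) : R :=
  \sum_(y : path) path_prob P pi y * X y.

Definition cov (P : 'M[R]_d.+1) (pi : 'rV[R]_d.+1) (X Y : path -> R) : R :=
  expect P pi (fun y => X y * Y y) - expect P pi X * expect P pi Y.

Definition Ncount (i j : S) (y : path) : R :=
  \sum_(t < W) ((y (inord t) == i) && (y (inord t.+1) == j))%:R.

End MC.

Definition eps (R : realFieldType) (d : nat) (P : 'M[R]_d.+1) (pi : 'rV[R]_d.+1)
  (n : nat) (j i : 'I_d.+1) : R := (P ^+ n) j i - pi 0 i.

From Pilot Require Import Defs.
From HB Require Import structures.
From mathcomp Require Import all_boot all_order all_algebra.
Set Implicit Arguments. Unset Strict Implicit. Unset Printing Implicit Defensive.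
Import Order.TTheory GRing.Theory Num.Theory.
Local Open Scope ring_scope.
From mathcomp Require Import ring.

(* Covariance of two transition counts N_{i,j}, N_{i,j'} (j <> j') of a
   stationary Markov chain, by transfer matrices.
   1. Transfer-matrix formula: summing a_{y_0} * prod_t Q_t(y_t, y_{t+1}) * b_{y_n}
      over all paths y gives (a Q_0 ... Q_{n-1} b)_{0,0}.  Hence the expectation
      of a product of edge weights f_t(Y_t, Y_{t+1}) is pi Q_0 ... Q_{W-1} 1,
      with Q_t the matrix P reweighted entrywise by f_t.
   2. N_{i,k} = sum_t A_t^k with A_t^k = 1{Y_t = i, Y_{t+1} = k}.  Weighting P by
      that indicator at one or two times and using pi P^n = pi, P^n 1 = 1 gives
      E[A_t^k] = pi_i p_{i,k} and, for t < s,
      E[A_t^j A_s^j'] = pi_i p_{i,j} [P^(s-t-1)]_{j,i} p_{i,j'};  for t = s the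
      product vanishes because j <> j'.
   3. Two combinatorial identities on double sums over 'I_W x 'I_W regroup the
      off-diagonal pairs by their gap s - t, producing the weights (W - t'). *)

Section TransferMatrix.
Variables (R : pzRingType) (d : nat).
Notation S := 'I_d.+1.

Definition fcons n (s : S) (z : {ffun 'I_n -> S}) : {ffun 'I_n.+1 -> S} :=
  [ffun k => if unlift ord0 k is Some k' then z k' else s].

Lemma fcons0 n s z : @fcons n s z ord0 = s.
Proof. by rewrite ffunE unlift_none. Qed.

Lemma fcons_inordS n s (z : {ffun 'I_n.+1 -> S}) k : (k <= n)%N ->
  fcons s z (inord k.+1) = z (inord k).
Proof.
move=> le_kn; have -> : inord k.+1 = lift ord0 (inord k : 'I_n.+1).
  by apply: ord_inj; rewrite lift0 !inordK.
by rewrite ffunE liftK.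
Qed.

Lemma inord0E n : inord 0 = ord0 :> 'I_n.+1.
Proof. by apply: ord_inj; rewrite inordK. Qed.

Lemma sum_paths_cons n (F : {ffun 'I_n.+1 -> S} -> R) :
  \sum_y F y = \sum_(s : S) \sum_(z : {ffun 'I_n -> S}) F (fcons s z).
Proof.
rewrite pair_big /= (reindex (fun p : S * {ffun 'I_n -> S} => fcons p.1 p.2)) //=.
exists (fun y => (y ord0, [ffun k => y (lift ord0 k)])) => [[s z] _ | y _] /=.
  by rewrite fcons0; congr pair; apply/ffunP => k; rewrite !ffunE liftK.
by apply/ffunP => k; rewrite ffunE; case: unliftP => [k' ->|<-]; rewrite ?ffunE.
Qed.

(* The transfer-matrix formula, by induction on the length: summing out the
   first state multiplies the initial row vector by the first matrix. *)
Lemma transfer_matrix n (a : 'rV[R]_d.+1) (b : 'cV[R]_d.+1) (Q : nat -> 'M[R]_d.+1) :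
  \sum_(y : {ffun 'I_n.+1 -> S}) a 0 (y ord0) *
     (\prod_(t < n) Q t (y (inord t)) (y (inord t.+1))) * b (y (inord n)) 0
  = (a *m (\prod_(t < n) Q t) *m b) 0 0.
Proof.
elim: n a Q => [|n IH] a Q.
  rewrite sum_paths_cons big_ord0 mulmx1 mxE; apply: eq_bigr => s _.
  under eq_bigr do rewrite big_ord0 mulr1 fcons0 inord0E fcons0.
  by rewrite sumr_const card_ffun !card_ord expn0 mulr1n.
have first_step : \sum_(y : {ffun 'I_n.+2 -> S}) a 0 (y ord0) *
     (\prod_(t < n.+1) Q t (y (inord t)) (y (inord t.+1))) * b (y (inord n.+1)) 0
  = \sum_(z : {ffun 'I_n.+1 -> S}) (a *m Q 0%N) 0 (z ord0) *
     (\prod_(t < n) Q t.+1 (z (inord t)) (z (inord t.+1))) * b (z (inord n)) 0.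
  rewrite sum_paths_cons exchange_big /=; apply: eq_bigr => z _.
  rewrite !mxE !big_distrl /=; apply: eq_bigr => s _.
  rewrite big_ord_recl /= fcons0 inord0E fcons0 !fcons_inordS // inord0E -!mulrA.
  congr (_ * (_ * (_ * _))); apply: eq_bigr => t _.
  by rewrite /bump leq0n add1n !fcons_inordS // ltnW.
rewrite first_step (IH _ (fun t => Q t.+1)) big_ord_recl -mulmxE !mulmxA.
by congr ((_ *m _ *m _) 0 0); apply: eq_bigr.
Qed.

End TransferMatrix.

Section GapSums.
Variable R : pzRingType.

(* Pairs t < s grouped by their gap s - t = k: there are W - k of them. *)
Lemma sum_upper_pairs W (f : nat -> R) :
  \sum_(t < W) \sum_(s < W) (if (t < s)%N then f (s - t.+1)%N else 0) =
  \sum_(1 <= k < W) (W - k)%:R * f k.-1.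
Proof.
elim: W => [|W IH]; first by rewrite big_ord0 big_geq.
rewrite big_ord_recr /= [X in _ + X = _]big1 ?addr0 => [|s _]; last first.
  by rewrite ltnNge -ltnS ltn_ord.
under eq_bigr => t _ do rewrite big_ord_recr /= ltn_ord.
rewrite big_split /= IH.
have -> : \sum_(1 <= k < W.+1) (W.+1 - k)%:R * f k.-1 =
    \sum_(1 <= k < W.+1) ((W - k)%:R * f k.-1 + f k.-1).
  apply: eq_big_nat => k /andP[_ le_kW].
  by rewrite subSn // -addn1 natrD mulrDl mul1r.
rewrite big_split /=; congr (_ + _).
  case: (W) => [|W']; first by rewrite !big_geq.
  by rewrite [RHS]big_nat_recr //= subnn mul0r addr0.
rewrite [RHS]big_add1 /= [RHS]big_nat_rev add0n big_mkord.
by apply: eq_bigr.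
Qed.

Lemma sum_offdiag_pairs W (f g : nat -> R) :
  \sum_(t < W) \sum_(s < W) (if (t < s)%N then f (s - t.+1)%N
        else if (s < t)%N then g (t - s.+1)%N else 0) =
  \sum_(1 <= k < W) (W - k)%:R * (f k.-1 + g k.-1).
Proof.
transitivity (\sum_(t < W) (\sum_(s < W) (if (t < s)%N then f (s - t.+1)%N else 0)
   + \sum_(s < W) (if (s < t)%N then g (t - s.+1)%N else 0))).
  apply: eq_bigr => t _; rewrite -big_split /=; apply: eq_bigr => s _.
  by case: ltngtP; rewrite ?addr0 ?add0r.
rewrite big_split /= sum_upper_pairs exchange_big /= sum_upper_pairs -big_split /=.
by apply: eq_big_nat => k _; rewrite mulrDr.
Qed.

Lemma sum_offdiag_const W (c : R) :
  \sum_(t < W) \sum_(s < W) (if (t < s)%N then c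
        else if (s < t)%N then c else 0) = W%:R * (W%:R * c - c).
Proof.
transitivity (\sum_(t < W) \sum_(s < W) (c - (s == t)%:R * c)).
  apply: eq_bigr => t _; apply: eq_bigr => s _.
  case: ltngtP => [lt_ts|lt_st|/ord_inj->]; last by rewrite eqxx mul1r subrr.
    by rewrite -val_eqE gtn_eqF // mul0r subr0.
  by rewrite -val_eqE ltn_eqF // mul0r subr0.
have diag t : \sum_(s < W) (s == t)%:R * c = c.
  by rewrite (bigD1 t) //= eqxx mul1r big1 ?addr0 // => s /negbTE->; rewrite mul0r.
under eq_bigr => t _ do rewrite sumrB sumr_const card_ord diag.
by rewrite sumr_const card_ord !mulr_natl.
Qed.

End GapSums.

Section StationaryChain.
Variables (R : realFieldType) (d W : nat) (P : 'M[R]_d.+1) (pi : 'rV[R]_d.+1).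
Hypothesis P_rows : forall a : 'I_d.+1, \sum_(b < d.+1) P a b = 1.
Hypothesis pi_stationary : pi *m P = pi.
Notation S := 'I_d.+1.
Notation trajectory := (Defs.path d W).

Definition weighted (f : S -> S -> R) : 'M[R]_d.+1 := \matrix_(a, b) (P a b * f a b).

(* The all-ones column vector: summing out the final state. *)
Definition ones : 'cV[R]_d.+1 := const_mx 1.

Lemma eq_expect (X Y : trajectory -> R) :
  (forall y, X y = Y y) -> expect P pi X = expect P pi Y.
Proof. by move=> XY; apply: eq_bigr => y _; rewrite XY. Qed.

Lemma expect_sum I (r : seq I) (p : pred I) (F : I -> trajectory -> R) :
  expect P pi (fun y => \sum_(k <- r | p k) F k y) =
  \sum_(k <- r | p k) expect P pi (F k).
Proof. by rewrite /expect exchange_big /=; apply: eq_bigr => y _; rewrite mulr_sumr. Qed.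

Lemma expect_edge_product (f : nat -> S -> S -> R) :
  expect P pi (fun y : trajectory =>
                 \prod_(t < W) f t (y (inord t)) (y (inord t.+1))) =
  (pi *m (\prod_(t < W) weighted (f t)) *m ones) 0 0.
Proof.
rewrite /expect -(@transfer_matrix R d W pi ones (fun t => weighted (f t))).
apply: eq_bigr => y _; rewrite /path_prob mxE mulr1 -mulrA -big_split /=.
by congr (_ * _); apply: eq_bigr => t _; rewrite mxE.
Qed.

(* pi is invariant under every power of P, and the rows of every power of P
   sum to 1: the time before the first and after the last marked transition
   contributes nothing. *)
Lemma stationary_pow n : pi *m P ^+ n = pi.
Proof.
elim: n => [|n IH]; first by rewrite expr0 mulmx1.
by rewrite exprSr -mulmxE mulmxA IH pi_stationary.
Qed.

Lemma stochastic_pow_ones n : P ^+ n *m ones = ones.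
Proof.
have P_ones : P *m ones = ones.
  apply/matrixP => a b; rewrite !mxE -[RHS](P_rows a).
  by apply: eq_bigr => k _; rewrite mxE mulr1.
elim: n => [|n IH]; first by rewrite expr0 mul1mx.
by rewrite exprS -mulmxE -mulmxA IH P_ones.
Qed.

Lemma prod_pow_except m t n (M : nat -> 'M[R]_d.+1) : (m <= t < n)%N ->
  (forall u, (m <= u < n)%N -> u != t -> M u = P) ->
  \prod_(m <= u < n) M u = P ^+ (t - m) * M t * P ^+ (n - t.+1).
Proof.
case/andP=> le_mt lt_tn M_P.
rewrite (big_cat_nat le_mt (ltnW lt_tn)) /= (big_cat_nat (leqnSn t) lt_tn) big_nat1.
rewrite -!prodr_const_nat mulrA; congr (_ * _ * _); apply: eq_big_nat.
  by move=> u /andP[le_mu lt_ut]; rewrite M_P ?(ltn_eqF lt_ut) ?le_mu ?(ltn_trans lt_ut).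
move=> u /andP[lt_tu lt_un].
by rewrite M_P ?(gtn_eqF lt_tu) ?lt_un ?(leq_trans le_mt (ltnW lt_tu)).
Qed.

Variable i : S.

Definition step_to (k : S) (a b : S) : R := ((a == i) && (b == k))%:R.

Definition jump (k : S) : 'M[R]_d.+1 := weighted (step_to k).

Lemma pi_jump k : pi *m jump k = \row_b (pi 0 i * P i k * (b == k)%:R).
Proof.
apply/matrixP => x b; rewrite (ord1 x) !mxE (big_only1 i) // => [|a /negbTE a_i _].
  by rewrite mxE /step_to eqxx /=; case: (eqVneq b k) => [->|_]; rewrite ?mulr1 ?mulr0.
by rewrite mxE /step_to a_i /= !mulr0.
Qed.

Lemma jump_ones k : jump k *m ones = \col_a ((a == i)%:R * P i k).
Proof.
apply/matrixP => a x; rewrite (ord1 x) !mxE (big_only1 k) // => [|b /negbTE b_k _].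
  by rewrite !mxE /step_to eqxx andbT; case: (eqVneq a i) => [->|_];
    rewrite ?mulr1 ?mulr0 ?mul1r ?mul0r.
by rewrite !mxE /step_to b_k andbF mulr0 mul0r.
Qed.

Lemma one_jump_value x y k :
  (pi *m (P ^+ x * jump k * P ^+ y) *m ones) 0 0 = pi 0 i * P i k.
Proof.
rewrite -!mulmxE !mulmxA stationary_pow -mulmxA stochastic_pow_ones -mulmxA jump_ones.
rewrite mxE (big_only1 i) // => [|a /negbTE a_i _]; first by rewrite mxE eqxx mul1r.
by rewrite mxE a_i mul0r mulr0.
Qed.

Lemma two_jumps_value x y k1 k2 M :
  (pi *m (P ^+ x * jump k1 * M * jump k2 * P ^+ y) *m ones) 0 0 =
  pi 0 i * P i k1 * M k1 i * P i k2.
Proof.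
rewrite -!mulmxE !mulmxA stationary_pow -mulmxA stochastic_pow_ones -mulmxA jump_ones.
rewrite pi_jump mxE (big_only1 i) // => [|a /negbTE a_i _].
  rewrite !mxE eqxx mul1r (big_only1 k1) // => [|b /negbTE b_k1 _].
    by rewrite mxE eqxx mulr1.
  by rewrite mxE b_k1 mulr0 mul0r.
by rewrite [X in _ * X]mxE a_i mul0r mulr0.
Qed.

Definition mark (t : nat) (k : S) (u : nat) (a b : S) : R :=
  if u == t then step_to k a b else 1.

Lemma weighted_mark t k u : weighted (mark t k u) = if u == t then jump k else P.
Proof. by apply/matrixP => a b; rewrite /mark; case: eqP; rewrite !mxE ?mulr1. Qed.

Definition visit (t : nat) (k : S) (y : trajectory) : R :=
  ((y (inord t) == i) && (y (inord t.+1) == k))%:R.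

Lemma visit_prod t k y : (t < W)%N ->
  visit t k y = \prod_(u < W) mark t k u (y (inord u)) (y (inord u.+1)).
Proof.
move=> lt_tW; rewrite (bigD1 (Ordinal lt_tW)) //= /mark eqxx big1 ?mulr1 // => u u_t.
by rewrite ifN //; apply: contra u_t => /eqP u_tE; apply/eqP/ord_inj.
Qed.

(* E[A_t^k] = pi_i p_{i,k}: under stationarity every time looks the same. *)
Lemma expect_visit t k : (t < W)%N -> expect P pi (visit t k) = pi 0 i * P i k.
Proof.
move=> lt_tW; rewrite (eq_expect (fun y => visit_prod k y lt_tW)).
rewrite expect_edge_product -(big_mkord xpredT (fun u => weighted (mark t k u))).
rewrite (@prod_pow_except 0 t) ?lt_tW // => [|u _ /negbTE u_t].
  by rewrite weighted_mark eqxx one_jump_value.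
by rewrite weighted_mark u_t.
Qed.

Lemma expect_visit_pair t s k1 k2 : (t < s)%N -> (s < W)%N ->
  expect P pi (fun y => visit t k1 y * visit s k2 y) =
  pi 0 i * P i k1 * (P ^+ (s - t.+1)) k1 i * P i k2.
Proof.
move=> lt_ts lt_sW; have lt_tW := ltn_trans lt_ts lt_sW.
pose f u a b := mark t k1 u a b * mark s k2 u a b.
have weighted_f u : weighted (f u) =
    if u == t then jump k1 else if u == s then jump k2 else P.
  apply/matrixP => a b; rewrite /f /mark.
  case: eqP => [->|_]; first by rewrite (ltn_eqF lt_ts) !mxE mulr1.
  by case: eqP; rewrite !mxE ?mul1r ?mulr1.
rewrite (eq_expect (Y := fun y => \prod_(u < W) f u (y (inord u)) (y (inord u.+1))));
  last by move=> y; rewrite (visit_prod k1 y lt_tW) (visit_prod k2 y lt_sW) -big_split.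
rewrite expect_edge_product -(big_mkord xpredT (fun u => weighted (f u))).
rewrite (big_cat_nat (leq0n t.+1) lt_tW) /=.
rewrite (@prod_pow_except 0 t) ?ltnSn // => [|u /andP[_ lt_ut] /negbTE u_t]; last first.
  by rewrite weighted_f u_t (ltn_eqF (leq_trans lt_ut lt_ts)).
rewrite (@prod_pow_except t.+1 s) ?lt_ts // => [|u /andP[lt_tu _] /negbTE u_s]; last first.
  by rewrite weighted_f u_s (gtn_eqF lt_tu).
rewrite !weighted_f eqxx (gtn_eqF lt_ts) eqxx subnn expr0 mulr1 !mulrA.
exact: two_jumps_value.
Qed.

Lemma expect_Ncount k :
  expect P pi (@Ncount R d W i k) = W%:R * (pi 0 i * P i k).
Proof.
rewrite (eq_expect (Y := fun y => \sum_(t < W) visit t k y)) // expect_sum.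
by rewrite (eq_bigr _ (fun t _ => expect_visit k (ltn_ord t))) sumr_const card_ord mulr_natl.
Qed.

Variables j j' : S.
Hypothesis j_neq_j' : j != j'.

(* E[N_{i,j} N_{i,j'}]: diagonal terms vanish since a step cannot end in both
   j and j'; off-diagonal terms are given by expect_visit_pair. *)
Lemma expect_Ncount_prod :
  expect P pi (fun y => @Ncount R d W i j y * @Ncount R d W i j' y) =
  pi 0 i * P i j * P i j' * \sum_(t < W) \sum_(s < W)
    (if (t < s)%N then (P ^+ (s - t.+1)) j i
     else if (s < t)%N then (P ^+ (t - s.+1)) j' i else 0).
Proof.
rewrite (eq_expect (Y := fun y => \sum_(t < W) \sum_(s < W) visit t j y * visit s j' y));
  last by move=> y; rewrite big_distrlr.
rewrite expect_sum mulr_sumr; apply: eq_bigr => t _; rewrite expect_sum mulr_sumr.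
apply: eq_bigr => s _; case: ltngtP => [lt_ts|lt_st|/ord_inj st].
- rewrite expect_visit_pair //; ring.
- rewrite (eq_expect (fun y => mulrC _ _)) expect_visit_pair //; ring.
- rewrite st mulr0 /expect big1 // => y _; rewrite /visit.
  case: (y _ == i); rewrite ?mul0r ?mulr0 //=.
  case: eqP => [->|_]; last by rewrite mul0r mulr0.
  by rewrite (negbTE j_neq_j') !mulr0.
Qed.

End StationaryChain.

(* The
   off-diagonal gap sums for f = P^n_{j,i}, g = P^n_{j',i} give E[N N'], and the
   same sums for the constant pi_i count the W^2 - W off-diagonal pairs. *)
Theorem mainTheorem2 (R : realFieldType) (d W : nat)
  (P : 'M[R]_d.+1) (pi : 'rV[R]_d.+1)
  (hP : ergodic P) (hpi : stationary P pi)
  (i j j' : 'I_d.+1) (hjj' : j != j') :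
  cov (W:=W) P pi (@Ncount R d W i j) (@Ncount R d W i j') =
  pi 0 i * P i j * P i j' *
    (- (W%:R * pi 0 i) +
     \sum_(1 <= t' < W) (W - t')%:R * (eps P pi t'.-1 j i + eps P pi t'.-1 j' i)).
Proof.
case: hP => [[_ P_rows] _]; case: hpi => [_ [_ pi_stationary]].
rewrite /cov expect_Ncount_prod // !expect_Ncount //.
rewrite (sum_offdiag_pairs W (fun n => (P ^+ n) j i) (fun n => (P ^+ n) j' i)).
have count_pairs := sum_offdiag_pairs W (fun _ => pi 0 i) (fun _ => pi 0 i).
rewrite sum_offdiag_const in count_pairs.
have split_eps : \sum_(1 <= t' < W) (W - t')%:R * (eps P pi t'.-1 j i + eps P pi t'.-1 j' i) =
  \sum_(1 <= k < W) (W - k)%:R * ((P ^+ k.-1) j i + (P ^+ k.-1) j' i)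
  - \sum_(1 <= k < W) (W - k)%:R * (pi 0 i + pi 0 i).
  by rewrite -sumrB; apply: eq_bigr => k _; rewrite /eps; ring.
rewrite split_eps -count_pairs; ring.
Qed.
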